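(* A real number $\alpha$ has a primitive recursive nested interval representation if and only if it admits a primitive recursive approximation.
   Context: $\mathbb{N}=\{0,1,2,\dots\}$. $\mathfrak{PR}$ denotes the primitive recursive functions $\mathbb{N}^n\to\mathbb{N}$. A $\mathfrak{PR}$-sequence is a function $A:\mathbb{N}\to\mathbb{Q}$ of the form $A(x)=\frac{f(x)-g(x)}{h(x)+1}$ with $f,g,h:\mathbb{N}\to\mathbb{N}$ primitive recursive. A primitive recursive approximation of $\alpha$ is a pair $(A,E)$ of $\mathfrak{PR}$-sequences such that $E$ is monotonically decreasing to $0$ and $|A(x)-\alpha|\le E(x)$ for all $x$. A primitive recursive nested interval representation of $\alpha$ is a pair of $\mathfrak{PR}$-sequences $f,g:\mathbb{N}\to\mathbb{Q}$ with $f(x)\le f(x+1)\le\alpha\le g(x+1)\le g(x)$ for all $x$ and $\lim_{x\to\infty}(g(x)-f(x))=0$. *)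

From Stdlib Require Import Reals.
From Stdlib Require Fin.
Open Scope R_scope.

Inductive PRF : nat -> Type :=
| PR_zero : forall n : nat, PRF n
| PR_succ : PRF 1
| PR_proj : forall n : nat, Fin.t n -> PRF n
| PR_comp : forall n m : nat, PRF m -> (Fin.t m -> PRF n) -> PRF n
| PR_rec  : forall n : nat, PRF n -> PRF (S (S n)) -> PRF (S n).

Definition fcons {n : nat} (a : nat) (v : Fin.t n -> nat) : Fin.t (S n) -> nat :=
  fun i => Fin.caseS' i (fun _ => nat) a v.

(* Semantics. For PR_rec g h: F(0, xs) = g xs, F(y+1, xs) = h(y, F(y, xs), xs). *)
Fixpoint PReval {n : nat} (p : PRF n) : (Fin.t n -> nat) -> nat :=
  match p in PRF n return (Fin.t n -> nat) -> nat with
  | PR_zero _ => fun _ => 0%nat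
  | PR_succ => fun v => S (v Fin.F1)
  | PR_proj _ i => fun v => v i
  | PR_comp _ _ f gs => fun v => PReval f (fun j => PReval (gs j) v)
  | PR_rec _ g h => fun v =>
      let xs := fun i => v (Fin.FS i) in
      nat_rect (fun _ => nat) (PReval g xs)
        (fun k acc => PReval h (fcons k (fcons acc xs))) (v Fin.F1)
  end.

Definition is_PR1 (f : nat -> nat) : Prop :=
  exists p : PRF 1, forall x : nat, PReval p (fun _ => x) = f x.

(* A PR-sequence: A(x) = (f(x) - g(x)) / (h(x) + 1) with f, g, h primitive
   recursive; the value is a rational number, viewed here inside R. *)
Definition PR_sequence (A : nat -> R) : Prop :=
  exists f g h : nat -> nat,
    is_PR1 f /\ is_PR1 g /\ is_PR1 h /\
    forall x : nat, A x = (INR (f x) - INR (g x)) / (INR (h x) + 1).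

Definition PR_approximation (alpha : R) : Prop :=
  exists A E : nat -> R,
    PR_sequence A /\ PR_sequence E /\
    (forall x : nat, E (S x) <= E x) /\ Un_cv E 0 /\
    (forall x : nat, Rabs (A x - alpha) <= E x).

Definition PR_nested_interval (alpha : R) : Prop :=
  exists f g : nat -> R,
    PR_sequence f /\ PR_sequence g /\
    (forall x : nat,
        f x <= f (S x) /\ f (S x) <= alpha /\ alpha <= g (S x) /\ g (S x) <= g x) /\
    Un_cv (fun x => g x - f x) 0.

(* If f <= alpha <= g with g - f -> 0, then A := f, E := g - f is an approximation.
   Conversely, alpha lies in every interval [A x - E x, A x + E x]; these need not be
   nested, but the running maximum of the left ends and the running minimum of the right
   ends are, and their gap at x is at most 2 E x.  They stay primitive recursive because
   the index at which the running maximum of a fraction sequence is attained is defined by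
   primitive recursion, comparing two fractions by cross-multiplication in N. *)

From Stdlib Require Import Reals.
From Stdlib Require Import Lra Lia.
Open Scope R_scope.

Definition is_PRn (n : nat) (F : (Fin.t n -> nat) -> nat) : Prop :=
  exists p : PRF n, forall v, PReval p v = F v.

Lemma is_PRn_ext n (F G : (Fin.t n -> nat) -> nat) :
  is_PRn n F -> (forall v, F v = G v) -> is_PRn n G.
Proof. intros [p Hp] HFG. exists p. intro v. rewrite Hp. apply HFG. Qed.

Lemma is_PR1_of_PRn (f : nat -> nat) : is_PRn 1 (fun v => f (v Fin.F1)) -> is_PR1 f.
Proof. intros [p Hp]. exists p. intro x. apply Hp. Qed.

Lemma is_PRn_proj n (i : Fin.t n) : is_PRn n (fun v => v i).
Proof. exists (PR_proj n i). reflexivity. Qed.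

Lemma is_PRn_const n (c : nat) : is_PRn n (fun _ => c).
Proof.
  induction c as [|c [p Hp]].
  - exists (PR_zero n). reflexivity.
  - exists (PR_comp n 1 PR_succ (fun _ => p)). intro v. simpl. now rewrite Hp.
Qed.

Lemma is_PRn_comp1 n (f : nat -> nat) G :
  is_PR1 f -> is_PRn n G -> is_PRn n (fun v => f (G v)).
Proof.
  intros [pf Hf] [pg Hg]. exists (PR_comp n 1 pf (fun _ => pg)). intro v. simpl.
  rewrite <- Hf, Hg. reflexivity.
Qed.

Lemma is_PRn_succ n F : is_PRn n F -> is_PRn n (fun v => S (F v)).
Proof. apply is_PRn_comp1. now exists PR_succ. Qed.

Definition vec2 {A : Type} (a b : A) : Fin.t 2 -> A :=
  fun j => Fin.caseS' j (fun _ => A) a (fun _ => b).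

Lemma is_PRn_comp2 n (op : nat -> nat -> nat) F G :
  is_PRn 2 (fun w => op (w Fin.F1) (w (Fin.FS Fin.F1))) ->
  is_PRn n F -> is_PRn n G -> is_PRn n (fun v => op (F v) (G v)).
Proof.
  intros [pop Hop] [pf Hf] [pg Hg]. exists (PR_comp n 2 pop (vec2 pf pg)). intro v.
  cbn [PReval]. rewrite Hop. cbn. now rewrite Hf, Hg.
Qed.

Lemma is_PR1_nat_rect (c : nat) (h : nat -> nat -> nat) :
  is_PRn 2 (fun w => h (w Fin.F1) (w (Fin.FS Fin.F1))) ->
  is_PR1 (nat_rect (fun _ => nat) c h).
Proof.
  intros [ph Hh]. destruct (is_PRn_const 0 c) as [pc Hc].
  exists (PR_rec 0 pc ph). intro x. simpl. rewrite Hc.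
  generalize (fun _ : Fin.t 0 => x); intro xs.
  induction x as [|x IHx]; simpl; [reflexivity|]. rewrite Hh. simpl. now rewrite IHx.
Qed.

Definition add_PRF : PRF 2 :=
  PR_rec 1 (PR_proj 1 Fin.F1) (PR_comp 3 1 PR_succ (fun _ => PR_proj 3 (Fin.FS Fin.F1))).

Lemma add_PRF_spec w : PReval add_PRF w = (w Fin.F1 + w (Fin.FS Fin.F1))%nat.
Proof. simpl. induction (w Fin.F1); simpl; congruence. Qed.

Definition mul_PRF : PRF 2 :=
  PR_rec 1 (PR_zero 1)
    (PR_comp 3 2 add_PRF (vec2 (PR_proj 3 (Fin.FS Fin.F1)) (PR_proj 3 (Fin.FS (Fin.FS Fin.F1))))).

Lemma mul_PRF_spec w : PReval mul_PRF w = (w Fin.F1 * w (Fin.FS Fin.F1))%nat.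
Proof.
  cbn -[add_PRF]. induction (w Fin.F1) as [|k IHk]; cbn -[add_PRF]; [reflexivity|].
  rewrite add_PRF_spec. cbn -[add_PRF]. rewrite IHk. lia.
Qed.

Definition pred_PRF : PRF 1 := PR_rec 0 (PR_zero 0) (PR_proj 2 Fin.F1).

Lemma pred_PRF_spec w : PReval pred_PRF w = Nat.pred (w Fin.F1).
Proof. simpl. destruct (w Fin.F1); reflexivity. Qed.

(* Recursion is on the first argument, so this computes [w (FS F1) - w F1]. *)
Definition monus_PRF : PRF 2 :=
  PR_rec 1 (PR_proj 1 Fin.F1) (PR_comp 3 1 pred_PRF (fun _ => PR_proj 3 (Fin.FS Fin.F1))).

Lemma monus_PRF_spec w : PReval monus_PRF w = (w (Fin.FS Fin.F1) - w Fin.F1)%nat.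
Proof.
  cbn -[pred_PRF]. induction (w Fin.F1) as [|k IHk]; cbn -[pred_PRF]; [lia|].
  rewrite pred_PRF_spec. cbn -[pred_PRF]. rewrite IHk. lia.
Qed.

Lemma is_PRn_add n F G : is_PRn n F -> is_PRn n G -> is_PRn n (fun v => (F v + G v)%nat).
Proof. apply is_PRn_comp2. exists add_PRF. exact add_PRF_spec. Qed.

Lemma is_PRn_mul n F G : is_PRn n F -> is_PRn n G -> is_PRn n (fun v => (F v * G v)%nat).
Proof. apply is_PRn_comp2. exists mul_PRF. exact mul_PRF_spec. Qed.

Lemma is_PRn_sub n F G : is_PRn n F -> is_PRn n G -> is_PRn n (fun v => (F v - G v)%nat).
Proof.
  intros HF HG. apply (is_PRn_comp2 n (fun a b => b - a)%nat G F); [|exact HG|exact HF].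
  exists monus_PRF. exact monus_PRF_spec.
Qed.

Lemma is_PRn_if_ltb n F G H K :
  is_PRn n F -> is_PRn n G -> is_PRn n H -> is_PRn n K ->
  is_PRn n (fun v => if (F v <? G v)%nat then H v else K v).
Proof.
  intros HF HG HH HK.
  (* [1 - (1 - m)] is the sign of [m] *)
  set (sg := fun v => (1 - (1 - (G v - F v)))%nat).
  assert (Hsg : is_PRn n sg).
  { apply is_PRn_sub; [apply is_PRn_const|].
    apply is_PRn_sub; [apply is_PRn_const|]. now apply is_PRn_sub. }
  apply (is_PRn_ext n (fun v => sg v * H v + (1 - sg v) * K v)%nat).
  - apply is_PRn_add; apply is_PRn_mul; auto.
    apply is_PRn_sub; [apply is_PRn_const|exact Hsg].
  - intro v. unfold sg. destruct (Nat.ltb_spec (F v) (G v)).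
    + replace (1 - (1 - (G v - F v)))%nat with 1%nat by lia. lia.
    + replace (1 - (1 - (G v - F v)))%nat with 0%nat by lia. lia.
Qed.

Lemma is_PR1_comp (f g : nat -> nat) : is_PR1 f -> is_PR1 g -> is_PR1 (fun x => f (g x)).
Proof.
  intros Hf Hg. apply is_PR1_of_PRn, is_PRn_comp1; [exact Hf|].
  apply is_PRn_comp1; [exact Hg|apply is_PRn_proj].
Qed.

Ltac solve_PRn :=
  repeat first
    [ apply is_PRn_proj | apply is_PRn_const | apply is_PRn_add | apply is_PRn_mul
    | apply is_PRn_sub | apply is_PRn_succ | apply is_PRn_if_ltb
    | apply is_PRn_comp1; [assumption|] ].

Ltac solve_PR1 := apply is_PR1_of_PRn; solve_PRn.

Definition frac (p q r : nat -> nat) (z : nat) : R :=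
  (INR (p z) - INR (q z)) / (INR (r z) + 1).

Lemma INR_succ_pos (n : nat) : 0 < INR n + 1.
Proof. pose proof (pos_INR n). lra. Qed.

Lemma Rdiv_pos_iff (z d : R) : 0 < d -> (0 < z / d <-> 0 < z).
Proof.
  intro Hd. split; intro Hz.
  - replace z with (z / d * d) by (field; lra). now apply Rmult_lt_0_compat.
  - now apply Rdiv_lt_0_compat.
Qed.

Lemma frac_PR_sequence p q r :
  is_PR1 p -> is_PR1 q -> is_PR1 r -> PR_sequence (frac p q r).
Proof. intros Hp Hq Hr. now exists p, q, r. Qed.

Lemma PR_sequence_ext (A B : nat -> R) :
  PR_sequence A -> (forall x, A x = B x) -> PR_sequence B.
Proof.
  intros (p & q & r & Hp & Hq & Hr & HA) HAB. exists p, q, r.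
  repeat split; auto. intro x. now rewrite <- HAB.
Qed.

Lemma PR_sequence_opp (A : nat -> R) : PR_sequence A -> PR_sequence (fun x => - A x).
Proof.
  intros (p & q & r & Hp & Hq & Hr & HA).
  apply (PR_sequence_ext (frac q p r)); [now apply frac_PR_sequence|].
  intro x. rewrite HA. unfold frac. pose proof (INR_succ_pos (r x)). field. lra.
Qed.

Lemma PR_sequence_add (A B : nat -> R) :
  PR_sequence A -> PR_sequence B -> PR_sequence (fun x => A x + B x).
Proof.
  intros (p1 & q1 & r1 & Hp1 & Hq1 & Hr1 & HA) (p2 & q2 & r2 & Hp2 & Hq2 & Hr2 & HB).
  apply (PR_sequence_ext (frac (fun z => p1 z * (r2 z + 1) + p2 z * (r1 z + 1))%nat
                               (fun z => q1 z * (r2 z + 1) + q2 z * (r1 z + 1))%nat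
                               (fun z => r1 z * r2 z + r1 z + r2 z)%nat)).
  - apply frac_PR_sequence; solve_PR1.
  - intro x. rewrite HA, HB. unfold frac. rewrite !plus_INR, !mult_INR, !plus_INR.
    pose proof (INR_succ_pos (r1 x)). pose proof (INR_succ_pos (r2 x)).
    simpl (INR 1). field. split; [|split]; nra.
Qed.

Lemma PR_sequence_sub (A B : nat -> R) :
  PR_sequence A -> PR_sequence B -> PR_sequence (fun x => A x - B x).
Proof. intros HA HB. now apply PR_sequence_add, PR_sequence_opp. Qed.

Lemma PR_sequence_comp (A : nat -> R) (m : nat -> nat) :
  PR_sequence A -> is_PR1 m -> PR_sequence (fun x => A (m x)).
Proof.
  intros (p & q & r & Hp & Hq & Hr & HA) Hm.
  exists (fun x => p (m x)), (fun x => q (m x)), (fun x => r (m x)).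
  repeat split; try now apply is_PR1_comp. intro x. apply HA.
Qed.

Section RunningMax.

Variables p q r : nat -> nat.

(* [frac a < frac u], cleared of the (positive) denominators. *)
Definition frac_ltb (a u : nat) : bool :=
  (p a * (r u + 1) + q u * (r a + 1) <? p u * (r a + 1) + q a * (r u + 1))%nat.

Lemma frac_ltb_spec a u : frac_ltb a u = true <-> frac p q r a < frac p q r u.
Proof.
  unfold frac_ltb. rewrite Nat.ltb_lt.
  set (lhs := (p a * (r u + 1) + q u * (r a + 1))%nat).
  set (rhs := (p u * (r a + 1) + q a * (r u + 1))%nat).
  pose proof (INR_succ_pos (r a)). pose proof (INR_succ_pos (r u)).
  assert (Hden : 0 < (INR (r a) + 1) * (INR (r u) + 1)) by nra.
  assert (Hcross : frac p q r u - frac p q r a =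
                   (INR rhs - INR lhs) / ((INR (r a) + 1) * (INR (r u) + 1))).
  { unfold frac, lhs, rhs. rewrite !plus_INR, !mult_INR, !plus_INR. simpl (INR 1).
    field. lra. }
  split; intro Hlt.
  - apply lt_INR in Hlt.
    enough (0 < frac p q r u - frac p q r a) by lra.
    rewrite Hcross. apply Rdiv_lt_0_compat; lra.
  - apply INR_lt.
    enough (0 < INR rhs - INR lhs) by lra.
    apply (Rdiv_pos_iff _ _ Hden). rewrite <- Hcross. lra.
Qed.

Definition argmax_index : nat -> nat :=
  nat_rect (fun _ => nat) 0%nat (fun k a => if frac_ltb a (S k) then S k else a).

Hypotheses (Hp : is_PR1 p) (Hq : is_PR1 q) (Hr : is_PR1 r).

Lemma argmax_index_PR : is_PR1 argmax_index.
Proof. apply is_PR1_nat_rect. unfold frac_ltb. solve_PRn. Qed.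

Lemma argmax_index_S x :
  frac p q r (argmax_index x) <= frac p q r (argmax_index (S x)) /\
  frac p q r (S x) <= frac p q r (argmax_index (S x)).
Proof.
  cbn [argmax_index nat_rect]. fold argmax_index.
  destruct (frac_ltb (argmax_index x) (S x)) eqn:Hlt.
  - apply frac_ltb_spec in Hlt. lra.
  - assert (~ frac p q r (argmax_index x) < frac p q r (S x)) as Hge
      by (rewrite <- frac_ltb_spec; congruence).
    lra.
Qed.

End RunningMax.

Lemma PR_sequence_running_max (A : nat -> R) :
  PR_sequence A ->
  exists M : nat -> R,
    PR_sequence M /\ (forall x, M x <= M (S x)) /\ (forall x, A x <= M x) /\
    (forall x, exists y, M x = A y).
Proof.
  intros HA. pose proof HA as (p & q & r & Hp & Hq & Hr & HAe).
  exists (fun x => A (argmax_index p q r x)).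
  split; [|split; [|split]].
  - now apply PR_sequence_comp, argmax_index_PR.
  - intro x. rewrite !HAe. apply argmax_index_S.
  - intros [|x]; rewrite !HAe; [apply Rle_refl|apply argmax_index_S].
  - intro x. now exists (argmax_index p q r x).
Qed.

Lemma PR_sequence_running_min (A : nat -> R) :
  PR_sequence A ->
  exists M : nat -> R,
    PR_sequence M /\ (forall x, M (S x) <= M x) /\ (forall x, M x <= A x) /\
    (forall x, exists y, M x = A y).
Proof.
  intros HA.
  destruct (PR_sequence_running_max _ (PR_sequence_opp _ HA))
    as (M & HM & Hmono & Hge & Hattained).
  exists (fun x => - M x). split; [|split; [|split]].
  - exact (PR_sequence_opp _ HM).
  - intro x. specialize (Hmono x). lra.
  - intro x. specialize (Hge x). lra.
  - intro x. destruct (Hattained x) as [y Hy]. exists y. rewrite Hy. apply Ropp_involutive.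
Qed.

Lemma Un_cv_squeeze_0 (u v : nat -> R) :
  (forall n, 0 <= u n <= v n) -> Un_cv v 0 -> Un_cv u 0.
Proof.
  intros Huv Hv eps Heps. destruct (Hv eps Heps) as [N HN]. exists N. intros n Hn.
  specialize (HN n Hn). specialize (Huv n). unfold R_dist in *.
  rewrite Rminus_0_r in *. pose proof (Rle_abs (v n)). rewrite Rabs_right; lra.
Qed.

Lemma Rabs_le_inv (a b : R) : Rabs a <= b -> - b <= a <= b.
Proof. pose proof (Rle_abs a). pose proof (Rle_abs (- a)). rewrite Rabs_Ropp in *. lra. Qed.

Theorem mainTheorem19 (alpha : R) :
  PR_nested_interval alpha <-> PR_approximation alpha.
Proof.
  split.
  - intros (f & g & Hf & Hg & Hnest & Hcv).
    assert (Hbetween : forall x, f x <= alpha <= g x)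
      by (intro x; destruct (Hnest x) as (? & ? & ? & ?); lra).
    exists f, (fun x => g x - f x).
    split; [exact Hf|split; [now apply PR_sequence_sub|split; [|split; [exact Hcv|]]]].
    + intro x. destruct (Hnest x) as (? & ? & ? & ?). lra.
    + intro x. apply Rabs_le. specialize (Hbetween x). lra.
  - intros (A & E & HA & HE & Hmono & Hcv & Habs).
    assert (Hbounds : forall x, A x - E x <= alpha <= A x + E x)
      by (intro x; pose proof (Rabs_le_inv _ _ (Habs x)); lra).
    destruct (PR_sequence_running_max _ (PR_sequence_sub _ _ HA HE))
      as (f & Hf & Hfmono & Hfge & Hfattained).
    destruct (PR_sequence_running_min _ (PR_sequence_add _ _ HA HE))
      as (g & Hg & Hgmono & Hgle & Hgattained).
    assert (Hflow : forall x, f x <= alpha)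
      by (intro x; destruct (Hfattained x) as [y ->]; apply Hbounds).
    assert (Hgup : forall x, alpha <= g x)
      by (intro x; destruct (Hgattained x) as [y ->]; apply Hbounds).
    exists f, g. split; [exact Hf|split; [exact Hg|split]].
    + intro x. repeat split; auto.
    + apply (Un_cv_squeeze_0 _ (fun x => E x + E x)).
      * intro x. specialize (Hflow x). specialize (Hgup x).
        specialize (Hfge x). specialize (Hgle x). lra.
      * rewrite <- (Rplus_0_r 0). now apply CV_plus.
Qed.
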